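(* Let $\{\alpha_i\}_{i=1}^N$ be an optimal solution of $$\hat{\mathcal{P}}_1:\ \min_{\{\alpha_i\}}\ \sum_{n=1}^N (1-\alpha_n)c_n\quad\text{s.t.}\quad \sum_{k=1}^{i}\alpha_k p^{inv}_{H,k}\tau\le\sum_{l=1}^{i}E_{H,l},\ \ \alpha_i p^{inv}_{H,i}\le p_H^{\max},\ \ \alpha_i\in\{0,1\},\ \ \forall i\in\{1,\dots,N\}.$$ Then there do not exist indices $i<j$ such that $\alpha_i=1$, $\alpha_j=0$, $c_i<c_j$ and $p^{inv}_{H,i}\ge p^{inv}_{H,j}$.
   Context: Data: $N$, $\tau>0$, $E_{H,i}\ge0$, channel gains $h_{G,i},h_{H,i}>0$, $p_G^{\max},p_H^{\max}>0$, $R,W,\sigma^2>0$, weights $w_G,w_D>0$. $p^{inv}_{j,i}=(2^{R/(W\tau)}-1)\sigma^2 h_{j,i}^{-1}$ for $j\in\{G,H\}$, $\kappa=\min\{p_G^{\max},w_D(w_G\tau)^{-1}\}$, and $c_i=w_D$ if $p^{inv}_{G,i}>\kappa$, $c_i=w_G p^{inv}_{G,i}\tau$ otherwise. *)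

From Stdlib Require Import Reals Lra Lia.
Open Scope R_scope.

Fixpoint sum1 (f : nat -> R) (n : nat) : R :=
  match n with
  | O => 0
  | S m => sum1 f m + f (S m)
  end.

Definition pinv (Rate W tau sigma2 : R) (h : nat -> R) (i : nat) : R :=
  (Rpower 2 (Rate / (W * tau)) - 1) * sigma2 * / h i.

Definition kappa (pGmax wG wD tau : R) : R := Rmin pGmax (wD * / (wG * tau)).

Definition cost (Rate W tau sigma2 pGmax wG wD : R) (hG : nat -> R) (i : nat) : R :=
  let p := pinv Rate W tau sigma2 hG i in
  if Rlt_dec (kappa pGmax wG wD tau) p then wD else wG * p * tau.

Definition feasible (N : nat) (tau pHmax : R) (EH pH : nat -> R) (alpha : nat -> R) : Prop :=
  forall i, (1 <= i <= N)%nat ->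
    sum1 (fun k => alpha k * pH k * tau) i <= sum1 EH i /\
    alpha i * pH i <= pHmax /\
    (alpha i = 0 \/ alpha i = 1).

Definition objective (N : nat) (c : nat -> R) (alpha : nat -> R) : R :=
  sum1 (fun n => (1 - alpha n) * c n) N.

Definition optimal (N : nat) (tau pHmax : R) (EH pH c : nat -> R) (alpha : nat -> R) : Prop :=
  feasible N tau pHmax EH pH alpha /\
  forall beta, feasible N tau pHmax EH pH beta -> objective N c alpha <= objective N c beta.

(** Exchange argument: if an optimal schedule served user [i] but not a later
    user [j] with [c i < c j] and [p_H,i >= p_H,j], serving [j] instead of [i]
    keeps every prefix energy constraint (the prefix sums can only drop) and
    every power constraint, while lowering the objective by [c j - c i]. *)

From Stdlib Require Import Reals Lra Lia.
Open Scope R_scope.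

Lemma sum1_change_at_two (f g : nat -> R) (i j : nat) :
  i <> j -> (1 <= i)%nat -> (1 <= j)%nat ->
  (forall k, k <> i -> k <> j -> g k = f k) ->
  forall n, sum1 g n = sum1 f n + (if Nat.leb i n then g i - f i else 0)
                                + (if Nat.leb j n then g j - f j else 0).
Proof.
  intros Hij Hi Hj Hfg n; induction n as [|n IH]; simpl.
  - destruct (Nat.leb_spec i 0), (Nat.leb_spec j 0); try lia; lra.
  - rewrite IH.
    destruct (Nat.leb_spec i n), (Nat.leb_spec j n),
             (Nat.leb_spec i (S n)), (Nat.leb_spec j (S n)); try lia.
    all: try (assert (i = S n) by lia; subst i);
         try (assert (j = S n) by lia; subst j);
         try (rewrite (Hfg (S n)) by lia); lra.
Qed.

Lemma pinv_pos (Rate W tau sigma2 : R) (h : nat -> R) (i : nat) :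
  0 < Rate -> 0 < W -> 0 < tau -> 0 < sigma2 -> 0 < h i ->
  0 < pinv Rate W tau sigma2 h i.
Proof.
  intros HRate HW Htau Hsigma Hh; unfold pinv.
  assert (Hrate_gt1 : 1 < Rpower 2 (Rate / (W * tau))).
  { rewrite <- (Rpower_O 2) at 1 by lra.
    apply Rpower_lt; [lra|].
    apply Rdiv_lt_0_compat; [lra|]; apply Rmult_lt_0_compat; lra. }
  assert (Hinv : 0 < / h i) by (apply Rinv_0_lt_compat; exact Hh).
  apply Rmult_lt_0_compat; [apply Rmult_lt_0_compat|]; lra.
Qed.

Definition exchange (alpha : nat -> R) (i j : nat) : nat -> R :=
  fun k => if Nat.eqb k i then 0 else if Nat.eqb k j then 1 else alpha k.

Section Exchange.

Variables (alpha : nat -> R) (i j : nat).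
Hypotheses (Hi : (1 <= i)%nat) (Hij : (i < j)%nat)
           (Hai : alpha i = 1) (Haj : alpha j = 0).

Lemma exchange_at_i : exchange alpha i j i = 0.
Proof. unfold exchange; now rewrite Nat.eqb_refl. Qed.

Lemma exchange_at_j : exchange alpha i j j = 1.
Proof.
  unfold exchange; destruct (Nat.eqb_spec j i); [lia|].
  now rewrite Nat.eqb_refl.
Qed.

Lemma exchange_elsewhere k : k <> i -> k <> j -> exchange alpha i j k = alpha k.
Proof.
  intros Hki Hkj; unfold exchange.
  now destruct (Nat.eqb_spec k i), (Nat.eqb_spec k j); try lia.
Qed.

Lemma exchange_binary k :
  (alpha k = 0 \/ alpha k = 1) -> exchange alpha i j k = 0 \/ exchange alpha i j k = 1.
Proof.
  intros Hbin.
  destruct (Nat.eq_dec k i) as [->|Hki]; [left; apply exchange_at_i|].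
  destruct (Nat.eq_dec k j) as [->|Hkj]; [right; apply exchange_at_j|].
  now rewrite exchange_elsewhere.
Qed.

Lemma sum1_exchange (F : nat -> R -> R) n :
  sum1 (fun k => F k (exchange alpha i j k)) n
  = sum1 (fun k => F k (alpha k)) n
    + (if Nat.leb i n then F i 0 - F i 1 else 0)
    + (if Nat.leb j n then F j 1 - F j 0 else 0).
Proof.
  rewrite (sum1_change_at_two (fun k => F k (alpha k)) _ i j) by
    (lia || (intros k Hki Hkj; now rewrite exchange_elsewhere)).
  now rewrite exchange_at_i, exchange_at_j, Hai, Haj.
Qed.

Lemma exchange_feasible N tau pHmax EH pH :
  (j <= N)%nat -> 0 < tau -> 0 <= pH i -> pH j <= pH i ->
  feasible N tau pHmax EH pH alpha ->
  feasible N tau pHmax EH pH (exchange alpha i j).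
Proof.
  intros HjN Htau HpHi Hpij Hfeas k Hk.
  destruct (Hfeas k Hk) as (Hsum & Hpow & Hbin).
  split; [|split].
  - rewrite (sum1_exchange (fun l a => a * pH l * tau)).
    assert (Hdrop : pH j * tau <= pH i * tau) by (apply Rmult_le_compat_r; lra).
    assert (Hnonneg : 0 <= pH i * tau) by (apply Rmult_le_pos; lra).
    destruct (Nat.leb_spec i k), (Nat.leb_spec j k); try lia; lra.
  - destruct (Nat.eq_dec k i) as [->|Hki].
    { rewrite exchange_at_i; rewrite Hai in Hpow; lra. }
    destruct (Nat.eq_dec k j) as [->|Hkj].
    + destruct (Hfeas i ltac:(lia)) as (_ & Hpowi & _).
      rewrite exchange_at_j; rewrite Hai in Hpowi; lra.
    + now rewrite exchange_elsewhere.
  - now apply exchange_binary.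
Qed.

Lemma objective_exchange N c :
  (j <= N)%nat ->
  objective N c (exchange alpha i j) = objective N c alpha + c i - c j.
Proof.
  intros HjN; unfold objective.
  rewrite (sum1_exchange (fun l a => (1 - a) * c l)).
  destruct (Nat.leb_spec i N), (Nat.leb_spec j N); try lia; lra.
Qed.

End Exchange.

Theorem proposition1 (N : nat) (tau : R) (EH hG hH : nat -> R)
  (pGmax pHmax Rate W sigma2 wG wD : R)
  (Htau : 0 < tau) (HEH : forall i, (1 <= i <= N)%nat -> 0 <= EH i)
  (HhG : forall i, (1 <= i <= N)%nat -> 0 < hG i)
  (HhH : forall i, (1 <= i <= N)%nat -> 0 < hH i)
  (HpG : 0 < pGmax) (HpH : 0 < pHmax) (HRate : 0 < Rate) (HW : 0 < W)
  (Hsigma : 0 < sigma2) (HwG : 0 < wG) (HwD : 0 < wD)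
  (alpha : nat -> R)
  (Hopt : optimal N tau pHmax EH (pinv Rate W tau sigma2 hH)
            (cost Rate W tau sigma2 pGmax wG wD hG) alpha) :
  ~ (exists i j : nat, (1 <= i)%nat /\ (i < j)%nat /\ (j <= N)%nat /\
       alpha i = 1 /\ alpha j = 0 /\
       cost Rate W tau sigma2 pGmax wG wD hG i < cost Rate W tau sigma2 pGmax wG wD hG j /\
       pinv Rate W tau sigma2 hH i >= pinv Rate W tau sigma2 hH j).
Proof.
  intros (i & j & Hi & Hij & HjN & Hai & Haj & Hc & Hp).
  destruct Hopt as [Hfeas Hmin].
  assert (HpHi : 0 < pinv Rate W tau sigma2 hH i)
    by (apply pinv_pos; auto; apply HhH; lia).
  assert (Hfeas' := exchange_feasible alpha i j Hi Hij Hai Haj N tau pHmax EH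
                      (pinv Rate W tau sigma2 hH) HjN Htau
                      ltac:(lra) ltac:(lra) Hfeas).
  specialize (Hmin _ Hfeas').
  rewrite (objective_exchange alpha i j Hi Hij Hai Haj) in Hmin by exact HjN.
  lra.
Qed.
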